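(* Let $\Gamma$ be a matching market and $\widehat\Gamma$ its induced continuum market. If $M$ is a stable integral matching in $\widehat\Gamma$, then the map $\mu$ defined by $\mu(w)=f$ and $w\in\mu(f)$ whenever $M_f(w)=1$ (for $w\in W$, $f\in\widetilde F$) is a stable matching in $\Gamma$.
   Context: Matching market $\Gamma$: finite firms $F$, finite workers $W=\{w_1,\dots,w_n\}$, null firm $\o$, $\widetilde F=F\cup\{\o\}$; each worker $w$ has a strict complete transitive preference $\succ_w$ over $\widetilde F$ ($f\succeq_w f'$ means $f\succ_w f'$ or $f=f'$); each firm $f\in F$ has a strict complete transitive preference $\succ_f$ over $2^W$; $Ch_f(S)$ is the $\succ_f$-best subset of $S$. A matching $\mu$ in $\Gamma$ assigns $\mu(w)\in\widetilde F$ and $\mu(f)\subseteq W$ with $\mu(w)=f\iff w\in\mu(f)$; it is stable if $\mu(w)\succeq_w\o$ for all $w$, $\mu(f)=Ch_f(\mu(f))$ for all $f\in F$, and there is no $f\in F$, $S\subseteq W$ with $f\succeq_w\mu(w)$ for all $w\in S$ and $S\succ_f\mu(f)$. Induced continuum market $\widehat\Gamma$: for each $f\in F$, list the sets $S\succ_f\emptyset$ as indicator vectors $\mathbf u^1\succ_f\cdots\succ_f\mathbf u^L$; for $\mathbf x\in[0,1]^W$ set $t_0=0$, $\mathbf z^0=\mathbf x$, $t_k=\min\{1-\sum_{j<k}t_j,\ z^{k-1}_i: u^k_i\ne0\}$, $\mathbf z^k=\mathbf z^{k-1}-t_k\mathbf u^k$ ($k=1,\dots,L$), and $\widehat{Ch}_f(\mathbf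 x)=\sum_k t_k\mathbf u^k$; also $\widehat{Ch}_{\o}(\mathbf x)=\mathbf x$. A matching in $\widehat\Gamma$ is $M=(M_f)_{f\in\widetilde F}$ with $M_f\in[0,1]^W$ and $\sum_{f\in\widetilde F}M_f(w)=1$ for all $w$; it is integral if all $M_f(w)\in\{0,1\}$. For $\mathbf x,\mathbf x'$, $\mathbf x\vee\mathbf x'$ is the componentwise maximum. Write $M'_f\succeq_f M_f$ if $M'_f=\widehat{Ch}_f(M'_f\vee M_f)$, and $M'_f\succ_f M_f$ if moreover $M'_f\ne M_f$. Let $A^{\preceq f}(M)(w)=\sum_{f'\in\widetilde F: f\succeq_w f'}M_{f'}(w)$. $M$ is stable if (i) $M_f=\widehat{Ch}_f(M_f)$ for every $f\in F$, and for all $w\in W$, $M_f(w)=0$ for every $f$ with $\o\succ_w f$; and (ii) there are no $f\in F$ and $M'_f\in[0,1]^W$ with $M'_f\succ_f M_f$ and $M'_f\le A^{\preceq f}(M)$. *)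

From HB Require Import structures.
From mathcomp Require Import all_boot all_order all_algebra.
From mathcomp Require Import reals.
Set Implicit Arguments. Unset Strict Implicit. Unset Printing Implicit Defensive.
Import Order.TTheory GRing.Theory Num.Theory.
Local Open Scope ring_scope.

(* A strict complete transitive preference on a finite type, as a boolean
   relation: [r x y] means "x is strictly preferred to y". *)
Definition strict_pref (T : eqType) (r : rel T) : Prop :=
  irreflexive r /\ transitive r /\ (forall x y, x != y -> r x y || r y x).

Section Market.
Variables (F W : finType).
(* Firms are [Some f]; the null firm is [None], so the extended set of
   firms  F~ = F ∪ {null}  is [option F]. *)
Variable pw : W -> rel (option F).
Variable pf : F -> rel {set W}.

Definition wpref (w : W) (a b : option F) : bool := pw w a b || (a == b).

Definition ch (f : F) (S : {set W}) : {set W} :=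
  odflt S [pick T : {set W} | (T \subset S) &&
            [forall T' : {set W}, ((T' \subset S) && (T' != T)) ==> pf f T T']].

Definition mu_of (mu : W -> option F) (f : F) : {set W} :=
  [set w | mu w == Some f].

Definition stable_discrete (mu : W -> option F) : Prop :=
  [/\ (forall w, wpref w (mu w) None),
      (forall f : F, mu_of mu f = ch f (mu_of mu f)) &
      ~ (exists (f : F) (S : {set W}),
            (forall w, w \in S -> wpref w (Some f) (mu w)) /\
            pf f S (mu_of mu f))].

Variable R : realType.

(* the sets S ≻_f ∅, listed as u^1 ≻_f u^2 ≻_f ... ≻_f u^L *)
Definition accept (f : F) : seq {set W} :=
  sort (fun S T : {set W} => (S == T) || pf f S T)
       [seq S <- enum [set: {set W}] | pf f S set0].

Definition ind (S : {set W}) : {ffun W -> R} := [ffun i => (i \in S)%:R].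

(* one step of the greedy procedure: state (z^{k-1}, 1 - Σ_{j<k} t_j, Σ_{j<k} t_j u^j);
   t_k = min{ 1 - Σ_{j<k} t_j, z^{k-1}_i : u^k_i ≠ 0 } *)
Definition chc_step (st : {ffun W -> R} * R * {ffun W -> R}) (S : {set W})
  : {ffun W -> R} * R * {ffun W -> R} :=
  let: (z, cap, out) := st in
  let t := \big[Num.min/cap]_(i in S) z i in
  ([ffun i => z i - t * ind S i], cap - t, [ffun i => out i + t * ind S i]).

Definition chc (f : F) (x : {ffun W -> R}) : {ffun W -> R} :=
  (foldl chc_step (x, 1, [ffun=> 0]) (accept f)).2.

Definition vmax (x y : {ffun W -> R}) : {ffun W -> R} :=
  [ffun i => Num.max (x i) (y i)].

Definition cwpref (f : F) (M' M : {ffun W -> R}) : Prop := M' = chc f (vmax M' M).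
Definition cspref (f : F) (M' M : {ffun W -> R}) : Prop := cwpref f M' M /\ M' <> M.

Definition cmatching (M : option F -> {ffun W -> R}) : Prop :=
  (forall a w, 0 <= M a w <= 1) /\
  (forall w, \sum_(a : option F) M a w = 1).

Definition integral (M : option F -> {ffun W -> R}) : Prop :=
  forall a w, M a w = 0 \/ M a w = 1.

Definition Abelow (M : option F -> {ffun W -> R}) (f : option F) : {ffun W -> R} :=
  [ffun w => \sum_(a : option F | wpref w f a) M a w].

Definition stable_cont (M : option F -> {ffun W -> R}) : Prop :=
  [/\ (forall f : F, M (Some f) = chc f (M (Some f))),
      (forall w (a : option F), pw w None a -> M a w = 0) &
      ~ (exists (f : F) (M' : {ffun W -> R}),
            (forall w, 0 <= M' w <= 1) /\
            cspref f M' (M (Some f)) /\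
            (forall w, M' w <= Abelow M (Some f) w))].

End Market.

From HB Require Import structures.
From mathcomp Require Import all_boot all_order all_algebra.
From mathcomp Require Import reals.
Set Implicit Arguments. Unset Strict Implicit. Unset Printing Implicit Defensive.
Import Order.TTheory GRing.Theory Num.Theory.
Local Open Scope ring_scope.

(* On indicator vectors the greedy procedure defining the continuum choice
   function is the discrete one in disguise: starting from 1_X with capacity 1,
   every acceptable set u^k not contained in X gets weight 0, and the first one
   contained in X takes the whole capacity, after which nothing moves.  Since
   the u^k are sorted by preference, that set is the best subset of X, so
   ^Ch_f(1_X) = 1_{Ch_f(X)}.  An integral continuum matching is the family of
   indicators of a discrete matching mu; stability of M then transfers to mu,
   a discrete block (f, S) giving the continuum block 1_{Ch_f(S ∪ mu(f))}. *)

Lemma sorted_nth_find (T : eqType) (e : rel T) (x0 : T) (P : pred T) (s : seq T) :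
  reflexive e -> transitive e -> sorted e s ->
  forall y, y \in s -> P y -> e (nth x0 s (find P s)) y.
Proof.
move=> e_refl e_tr; elim: s => //= x s IH xs y; rewrite inE.
have [Px|nPx] := ifPn; first case/orP=> [/eqP -> //|ys _].
  by have /allP := order_path_min e_tr xs; apply.
case/orP => [/eqP -> Py|ys Py]; first by rewrite Py in nPx.
exact: IH (path_sorted xs) _ ys Py.
Qed.

Section Greedy.
Variables (W : finType) (R : realType).
Implicit Types (S X : {set W}) (L : seq {set W}) (z out : {ffun W -> R}) (cap : R).

Lemma chc_step_min0 z cap out S :
  \big[Num.min/cap]_(i in S) z i = 0 -> chc_step (z, cap, out) S = (z, cap, out).
Proof.
rewrite /chc_step => ->; rewrite subr0.
by congr (_, _, _); apply/ffunP => i; rewrite ffunE mul0r ?subr0 ?addr0.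
Qed.

Lemma foldl_chc_step_cap0 L z out : (forall i, 0 <= z i) ->
  foldl (@chc_step W R) (z, 0, out) L = (z, 0, out).
Proof.
move=> z_ge0; elim: L => // S L IH.
have min0 : \big[Num.min/0]_(i in S) z i = 0.
  by apply: le_anti; rewrite bigmin_le_id le_bigmin.
by rewrite -[LHS]/(foldl _ (chc_step (z, 0, out) S) L) chc_step_min0.
Qed.

Lemma ind_ge0 S i : 0 <= ind R S i.
Proof. by rewrite ffunE ler0n. Qed.

Lemma ind_le1 S i : ind R S i <= 1.
Proof. by rewrite ffunE lern1 leq_b1. Qed.

(* If no set of L lies in X, [find] returns [size L] and [nth] the default [set0]. *)
Lemma foldl_chc_step_ind L X :
  (foldl (@chc_step W R) (ind R X, 1, [ffun=> 0]) L).2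
  = ind R (nth set0 L (find (fun S => S \subset X) L)).
Proof.
elim: L => [|S L IH]; first by apply/ffunP => i; rewrite !ffunE inE.
rewrite -[LHS]/((foldl _ (chc_step (ind R X, 1, [ffun=> 0]) S) L).2) [in RHS]/=.
have [SX|nSX] := boolP (S \subset X).
  have min1 : \big[Num.min/1]_(i in S) ind R X i = 1.
    by apply: bigmin_eq_id => i /(subsetP SX) iX; rewrite ffunE iX.
  rewrite /chc_step min1 subrr foldl_chc_step_cap0 => [|i] /=.
    by apply/ffunP => i; rewrite !ffunE mul1r add0r.
  rewrite !ffunE mul1r subr_ge0.
  by case: (boolP (i \in S)) => [/(subsetP SX) -> | _]; rewrite ?ler0n.
rewrite chc_step_min0; first exact: IH.
have [j jS jX] := subsetPn nSX.
apply: le_anti; rewrite le_bigmin ?ler01 ?andbT => [|//|i _]; last exact: ind_ge0.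
by apply: (bigmin_inf j) => //; rewrite ffunE (negbTE jX).
Qed.

Lemma ind_inj : injective (@ind W R).
Proof.
move=> A B /ffunP eqAB; apply/setP => i; move: (eqAB i).
by rewrite !ffunE => /eqP; rewrite eqr_nat; case: (i \in A); case: (i \in B).
Qed.

Lemma vmax_ind (A B : {set W}) : vmax (ind R A) (ind R B) = ind R (A :|: B).
Proof.
apply/ffunP => i; rewrite !ffunE inE.
by case: (i \in A); case: (i \in B); rewrite /= ?maxxx ?(maxEle, ler01, ler10).
Qed.

End Greedy.

Section ChoiceFunction.
Variables (F W : finType) (pf : F -> rel {set W}) (f : F).
Hypothesis pf_strict : strict_pref (pf f).
Implicit Types (S T X Y : {set W}).

Definition best_subset X T :=
  T \subset X /\ forall T', T' \subset X -> T' != T -> pf f T T'.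

Lemma best_subset_unique X T1 T2 :
  best_subset X T1 -> best_subset X T2 -> T1 = T2.
Proof.
case: pf_strict => irr [tr _] [T1X T1best] [T2X T2best].
apply/eqP; apply: contraT => neqT.
have neqT' : T2 != T1 by rewrite eq_sym.
by have := tr _ _ _ (T2best _ T1X neqT) (T1best _ T2X neqT'); rewrite irr.
Qed.

Lemma best_subset_ch X T : best_subset X T -> ch pf f X = T.
Proof.
move=> bestT; rewrite /ch.
case: pickP => [T' /andP [T'X /forallP T'best] | none] /=.
  apply: best_subset_unique bestT; split=> // T'' T''X neqT''.
  by have /implyP := T'best T''; rewrite T''X neqT''; apply.
case: bestT => TX Tbest; move: (none T); rewrite TX /=.
move/negbT/forallPn => [T']; rewrite negb_imply => /andP [/andP [T'X neqT']].
by rewrite Tbest.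
Qed.

Lemma best_subset_greedy X :
  let P S := S \subset X in
  best_subset X (nth set0 (accept pf f) (find P (accept pf f))).
Proof.
move=> P; case: pf_strict => irr [tr tot].
pose e S T := (S == T) || pf f S T.
have e_refl : reflexive e by move=> S; rewrite /e eqxx.
have e_tr : transitive e.
  move=> T S U /orP [/eqP -> // | ST] /orP [/eqP <- | TU]; rewrite /e ?ST ?orbT //.
  by rewrite (tr _ _ _ ST TU) orbT.
have e_total : total e.
  move=> S T; rewrite /e; have [-> | neqST] := eqVneq S T; first by [].
  exact: tot.
have memL S : (S \in accept pf f) = pf f S set0.
  by rewrite mem_sort mem_filter mem_enum inE andbT.
have [hasP | hasNP] := boolP (has P (accept pf f)).
  set T := nth _ _ _; have TX : P T by apply: nth_find.
  have acceptT : pf f T set0 by rewrite -memL mem_nth // -has_find.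
  split=> // T' T'X neqT'; have [-> // | T'0] := eqVneq T' set0.
  case/orP: (tot _ _ T'0) => [acceptT' | ]; last exact: tr.
  have sortedL : sorted e (accept pf f) := sort_sorted e_total _.
  have T'L : T' \in accept pf f by rewrite memL.
  have /orP [/eqP eqT | //] : (T == T') || pf f T T'
    := sorted_nth_find set0 (P := P) e_refl e_tr sortedL T'L T'X.
  by rewrite eqT eqxx in neqT'.
rewrite nth_default; last by rewrite leqNgt -has_find.
split=> [|T' T'X T'0]; first exact: sub0set.
case/orP: (tot _ _ T'0) => // acceptT'.
by move/hasPn/(_ T'): hasNP; rewrite memL acceptT' /P T'X => /(_ isT).
Qed.

Lemma best_subset_of_ch X : best_subset X (ch pf f X).
Proof. by rewrite (best_subset_ch (best_subset_greedy X)); apply: best_subset_greedy. Qed.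

Lemma best_subset_sub X Y T :
  best_subset X T -> T \subset Y -> Y \subset X -> best_subset Y T.
Proof.
move=> [_ Tbest] TY YX; split=> // T' T'Y; apply: Tbest.
exact: subset_trans T'Y YX.
Qed.

Lemma chc_ind (R : realType) X : chc pf f (ind R X) = ind R (ch pf f X).
Proof.
rewrite /chc foldl_chc_step_ind; congr (ind R _); symmetry.
exact/best_subset_ch/best_subset_greedy.
Qed.

Lemma cspref_ch_setU (R : realType) S T :
  pf f S T -> cspref pf f (ind R (ch pf f (S :|: T))) (ind R T).
Proof.
move=> ST; have bestU := best_subset_of_ch (S :|: T).
set U := ch pf f (S :|: T) in bestU *.
split.
  rewrite /cwpref vmax_ind chc_ind; congr (ind R _); symmetry; apply: best_subset_ch.
  apply: (best_subset_sub bestU); first exact: subsetUl.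
  by rewrite subUset bestU.1 subsetUr.
move/ind_inj => UT; case: pf_strict => irr [tr _].
have [SU | neqSU] := eqVneq S U; first by rewrite SU UT irr in ST.
by have := tr _ _ _ (bestU.2 _ (subsetUl _ _) neqSU) ST; rewrite UT irr.
Qed.

End ChoiceFunction.

Section IntegralMatching.
Variables (F W : finType) (R : realType) (M : option F -> {ffun W -> R}).
Hypotheses (M_matching : cmatching M) (M_integral : integral M).

Definition induced_matching (mu : W -> option F) :=
  forall w a, mu w = a <-> M a w = 1.

Lemma integral_induced_matching : exists mu, induced_matching mu.
Proof.
have card1 w : #|[set a | M a w == 1]| = 1%N.
  apply/eqP; rewrite -(pnatr_eq1 R) -[X in _ == X](M_matching.2 w).
  rewrite -sumr_const big_mkcond.
  apply/eqP/eq_bigr => a _; rewrite inE.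
  by case: (M_integral a w) => ->; rewrite ?eqxx // eq_sym oner_eq0.
exists (fun w => odflt None [pick a in [set a | M a w == 1]]) => w a.
have /cards1P [b Pb] : #|[set a | M a w == 1]| == 1%N by rewrite card1.
have Mb c : (M c w == 1) = (c == b) by rewrite -in_set1 -Pb inE.
rewrite Pb; case: pickP => [c | /(_ b)]; rewrite ?in_set1 ?eqxx //= => /eqP ->.
by split=> [<- | /eqP]; [apply/eqP; rewrite Mb | rewrite Mb => /eqP].
Qed.

Variable mu : W -> option F.
Hypothesis mu_induced : induced_matching mu.

Lemma induced_matching_ind f : M (Some f) = ind R (mu_of mu f).
Proof.
apply/ffunP => w; rewrite !ffunE inE.
have [/mu_induced -> // | neq] := eqVneq (mu w) (Some f).
by case: (M_integral (Some f) w) => // /mu_induced eq; rewrite eq eqxx in neq.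
Qed.

Lemma induced_matching_one w : M (mu w) w = 1.
Proof. exact/mu_induced. Qed.

Variable pw : W -> rel (option F).

Lemma induced_matching_rational :
  (forall w, strict_pref (pw w)) -> (forall w a, pw w None a -> M a w = 0) ->
  forall w, wpref pw w (mu w) None.
Proof.
move=> pw_strict M_null w; rewrite /wpref.
have [-> | neq] := eqVneq (mu w) None; first by rewrite orbT.
have [_ [_ tot]] := pw_strict w; case/orP: (tot _ _ neq) => [-> // | /M_null].
by rewrite induced_matching_one => /eqP; rewrite oner_eq0.
Qed.

Lemma ind_le_Abelow b (U : {set W}) :
  (forall w, w \in U -> wpref pw w b (mu w)) ->
  forall w, ind R U w <= Abelow pw M b w.
Proof.
have M_ge0 a w : 0 <= M a w by case/andP: (M_matching.1 a w).
move=> Ub w; rewrite !ffunE; have [wU | _] := boolP (w \in U); last exact: sumr_ge0.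
rewrite -(induced_matching_one w) (bigD1 (mu w)) ?Ub //= lerDl.
exact: sumr_ge0.
Qed.

End IntegralMatching.

Theorem lemma2 (F W : finType) (pw : W -> rel (option F)) (pf : F -> rel {set W})
  (hpw : forall w, strict_pref (pw w)) (hpf : forall f, strict_pref (pf f))
  (R : realType) (M : option F -> {ffun W -> R}) :
  cmatching M -> integral M -> stable_cont pw pf M ->
  exists mu : W -> option F,
    (forall (w : W) (a : option F), mu w = a <-> M a w = 1) /\
    stable_discrete pw pf mu.
Proof.
move=> M_matching M_integral [M_fixed M_null M_unblocked].
have [mu mu_induced] := integral_induced_matching M_matching M_integral.
have M_ind := induced_matching_ind M_integral mu_induced.
exists mu; split=> //; split.
- exact: induced_matching_rational.
- by move=> f; apply: (@ind_inj W R); rewrite -chc_ind // -M_ind -M_fixed.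
move=> [f [S [S_wpref S_pref]]]; apply: M_unblocked.
exists f, (ind R (ch pf f (S :|: mu_of mu f))); rewrite M_ind.
split; first by move=> w; rewrite ind_ge0 ind_le1.
split; first exact: cspref_ch_setU.
apply: (ind_le_Abelow M_matching mu_induced) => w.
move/(subsetP (best_subset_of_ch (hpf f) _).1).
rewrite !inE => /orP [/S_wpref // | /eqP ->].
by rewrite /wpref eqxx orbT.
Qed.
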